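(* Let $d$ be prime and let $f:\mathbb{Z}_{c_1}\times\mathbb{Z}_{c_2}\to\mathbb{Z}_d$ be a function that cannot be written as $f(s_1,s_2)=[g_1(s_1)+g_2(s_2)]_d$ for any $g_1:\mathbb{Z}_{c_1}\to\mathbb{Z}_d$, $g_2:\mathbb{Z}_{c_2}\to\mathbb{Z}_d$. Then the only non-signalling distribution $p(m_1,m_2|s_1,s_2)$ ($m_1,m_2\in\mathbb{Z}_d$) whose correlator is $p(k|\mathbf{s})=\delta^k_{f(\mathbf{s})}$ for all $\mathbf{s}$ is $$p(m_1,m_2|s_1,s_2)=\begin{cases}d^{-1}&\text{if }[m_1+m_2]_d=f(s_1,s_2),\\0&\text{otherwise.}\end{cases}$$
   Context: $[\cdot]_d$ is reduction mod $d$. Correlator: $p(k|\mathbf{s})=\sum_{(m_1,m_2):[m_1+m_2]_d=k}p(m_1,m_2|\mathbf{s})$. Non-signalling (bipartite): $\sum_{m_2}p(m_1,m_2|s_1,s_2)$ is independent of $s_2$ and $\sum_{m_1}p(m_1,m_2|s_1,s_2)$ is independent of $s_1$. *)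

From mathcomp Require Import all_boot all_order all_algebra.
Set Implicit Arguments. Unset Strict Implicit. Unset Printing Implicit Defensive.
Import Order.TTheory GRing.Theory Num.Theory.
Local Open Scope ring_scope.

(* Inputs s1 : 'I_c1 (= Z_{c1}), s2 : 'I_c2, outputs m1 m2 : 'I_d (= Z_d).
   A conditional distribution p m1 m2 s1 s2 = p(m1,m2|s1,s2). *)
Definition behaviour (R : realFieldType) (d c1 c2 : nat) :=
  'I_d -> 'I_d -> 'I_c1 -> 'I_c2 -> R.

Definition is_cond_distr (R : realFieldType) (d c1 c2 : nat)
  (p : behaviour R d c1 c2) : Prop :=
  (forall m1 m2 s1 s2, 0 <= p m1 m2 s1 s2) /\
  (forall s1 s2, \sum_(m1 < d) \sum_(m2 < d) p m1 m2 s1 s2 = 1).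

Definition non_signalling (R : realFieldType) (d c1 c2 : nat)
  (p : behaviour R d c1 c2) : Prop :=
  (forall m1 s1 s2 s2', \sum_(m2 < d) p m1 m2 s1 s2 = \sum_(m2 < d) p m1 m2 s1 s2') /\
  (forall m2 s1 s1' s2, \sum_(m1 < d) p m1 m2 s1 s2 = \sum_(m1 < d) p m1 m2 s1' s2).

Definition correlator (R : realFieldType) (d c1 c2 : nat)
  (p : behaviour R d c1 c2) (k : 'I_d) (s1 : 'I_c1) (s2 : 'I_c2) : R :=
  \sum_(m1 < d) \sum_(m2 < d | ((m1 + m2) %% d)%N == nat_of_ord k) p m1 m2 s1 s2.

Definition additively_separable (d c1 c2 : nat) (f : 'I_c1 -> 'I_c2 -> 'I_d) : Prop :=
  exists (g1 : 'I_c1 -> 'I_d) (g2 : 'I_c2 -> 'I_d),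
    forall s1 s2, nat_of_ord (f s1 s2) = ((g1 s1 + g2 s2) %% d)%N.

Definition uniform_on_f (R : realFieldType) (d c1 c2 : nat)
  (f : 'I_c1 -> 'I_c2 -> 'I_d) : behaviour R d c1 c2 :=
  fun m1 m2 s1 s2 =>
    if ((m1 + m2) %% d)%N == nat_of_ord (f s1 s2) then (d%:R)^-1 else 0.

(** Since the correlator is deterministic, p(m1,m2|s) vanishes off
    the line m1 + m2 = f(s), so both marginals are read off the diagonal:
    Alice's marginal at m equals Bob's marginal at f(s) - m.  Combining the two
    no-signalling conditions, Alice's marginal at s1' is her marginal at s1
    shifted by f(s1,s2) - f(s1',s2); as it does not depend on s2 either, it is
    invariant under the shift by a second difference of f, which is nonzero
    when f is not additively separable.  A nonzero shift generates Z_d for d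
    prime, so the marginal is uniform, and then p = 1/d on the line. *)
From mathcomp Require Import all_boot all_order all_algebra.
From mathcomp Require Import ring.
From Stdlib Require Import FunctionalExtensionality.
Set Implicit Arguments. Unset Strict Implicit. Unset Printing Implicit Defensive.
Import Order.TTheory GRing.Theory Num.Theory.
Local Open Scope ring_scope.

Section CyclicShifts.

Variable n : nat.
Local Notation d := n.+2.

Lemma modn_add_ord_eq (m1 m2 k : 'I_d) :
  (((m1 + m2) %% d)%N == k) = (m2 == k - m1).
Proof.
have -> : ((m1 + m2) %% d)%N = nat_of_ord (m1 + m2)%R by [].
by rewrite val_eqE [RHS]eq_sym subr_eq addrC eq_sym.
Qed.

Lemma eq_subr_sym (m1 m2 k : 'I_d) : (m2 == k - m1) = (m1 == k - m2).
Proof. by rewrite -!modn_add_ord_eq addnC. Qed.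

Lemma shift_invariant_const (T : Type) (g : 'I_d -> T) (u : 'I_d) :
  prime d -> u != 0 -> (forall x, g (x + u) = g x) -> forall x, g x = g 0.
Proof.
move=> d_prime u_neq0 g_per x.
have u_unit : u \is a GRing.unit.
  move: (@unitZpE n.+2 u erefl); rewrite (natr_Zp u) => ->.
  rewrite prime_coprime // gtnNdvd //.
  by rewrite lt0n; apply: contra u_neq0 => /eqP u0; apply/eqP/val_inj.
have g_perk k y : g (y + u *+ k) = g y.
  by elim: k => [|k IH]; rewrite ?mulr0n ?addr0 // mulrSr addrA g_per.
have -> : x = 0 + u *+ nat_of_ord (u^-1 * x).
  by rewrite -mulr_natr natr_Zp mulrA mulrV // mul1r add0r.
exact: g_perk.
Qed.

(* A second difference of f vanishing identically means f(s1,s2) = f(s1,0) + (f(0,s2) - f(0,0)). *)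
Lemma additively_separable_of_diff2 c1 c2 (f : 'I_c1 -> 'I_c2 -> 'I_d) :
  (forall s1 s1' s2 s2', f s1 s2 - f s1' s2 = f s1 s2' - f s1' s2') ->
  additively_separable f.
Proof.
case: c1 f => [|c1] f diff2; first by exists (fun _ => 0), (fun _ => 0) => [[]].
case: c2 f diff2 => [|c2] f diff2; first by exists (fun _ => 0), (fun _ => 0) => ? [].
exists (fun s1 => f s1 ord0), (fun s2 => f ord0 s2 - f ord0 ord0) => s1 s2.
change ((f s1 s2 : nat) = (f s1 ord0 + (f ord0 s2 - f ord0 ord0))%R); congr nat_of_ord.
rewrite -[f s1 s2](subrK (f ord0 s2)) (diff2 s1 ord0 s2 ord0); ring.
Qed.

Lemma non_separable_diff2 c1 c2 (f : 'I_c1 -> 'I_c2 -> 'I_d) :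
  ~ additively_separable f ->
  exists s1 s1' s2 s2', f s1 s2 - f s1' s2 != f s1 s2' - f s1' s2'.
Proof.
move=> not_sep.
have [/existsP [a /existsP [b /existsP [c /existsP [e ne]]]] | all_eq] :=
  boolP [exists s1, exists s1', exists s2, exists s2',
           f s1 s2 - f s1' s2 != f s1 s2' - f s1' s2'].
  by exists a, b, c, e.
case: not_sep; apply: additively_separable_of_diff2 => a b c e.
apply/eqP; apply: contraNT all_eq => ne.
by apply/existsP; exists a; apply/existsP; exists b; apply/existsP; exists c;
   apply/existsP; exists e.
Qed.

End CyclicShifts.

Section Behaviours.

Variables (R : realFieldType) (n c1 c2 : nat).
Local Notation d := n.+2.
Implicit Types (p : behaviour R d c1 c2) (f : 'I_c1 -> 'I_c2 -> 'I_d).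

Definition marginal1 p m1 s1 s2 := \sum_(m2 < d) p m1 m2 s1 s2.
Definition marginal2 p m2 s1 s2 := \sum_(m1 < d) p m1 m2 s1 s2.

Lemma correlatorE p k s1 s2 :
  correlator p k s1 s2 = \sum_(m1 < d) p m1 (k - m1) s1 s2.
Proof.
apply: eq_bigr => m1 _.
by under eq_bigl do rewrite modn_add_ord_eq; rewrite big_pred1_eq.
Qed.

Lemma sum_const_ord_eq1 (x : R) : \sum_(m < d) x = 1 -> x = d%:R^-1.
Proof.
rewrite sumr_const card_ord -[x *+ _]mulr_natr => x_d.
by rewrite -[x](@mulfK _ d%:R) ?pnatr_eq0 // x_d mul1r.
Qed.

Lemma sum_const_ord_inv : \sum_(m < d) d%:R^-1 = 1 :> R.
Proof. by rewrite sumr_const card_ord -[_ *+ d]mulr_natr mulVf ?pnatr_eq0. Qed.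

Lemma uniform_on_f_ge0 f m1 m2 s1 s2 : 0 <= uniform_on_f R f m1 m2 s1 s2.
Proof. by rewrite /uniform_on_f; case: ifP; rewrite ?invr_ge0 ?ler0n. Qed.

Lemma marginal1_uniform_on_f f m1 s1 s2 :
  marginal1 (uniform_on_f R f) m1 s1 s2 = d%:R^-1.
Proof.
rewrite /marginal1 /uniform_on_f.
by under eq_bigr do rewrite modn_add_ord_eq; rewrite -big_mkcond big_pred1_eq.
Qed.

Lemma marginal2_uniform_on_f f m2 s1 s2 :
  marginal2 (uniform_on_f R f) m2 s1 s2 = d%:R^-1.
Proof.
rewrite /marginal2 /uniform_on_f.
under eq_bigr do rewrite modn_add_ord_eq eq_subr_sym.
by rewrite -big_mkcond big_pred1_eq.
Qed.

Lemma uniform_on_f_cond_distr f : is_cond_distr (uniform_on_f R f).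
Proof.
split=> [|s1 s2]; first exact: uniform_on_f_ge0.
by under eq_bigr do rewrite -/(marginal1 _ _ _ _) marginal1_uniform_on_f; exact: sum_const_ord_inv.
Qed.

Lemma uniform_on_f_non_signalling f : non_signalling (uniform_on_f R f).
Proof.
split=> *.
  by rewrite -!/(marginal1 _ _ _ _) !marginal1_uniform_on_f.
by rewrite -!/(marginal2 _ _ _ _) !marginal2_uniform_on_f.
Qed.

Lemma correlator_uniform_on_f f k s1 s2 :
  correlator (uniform_on_f R f) k s1 s2 = (k == f s1 s2)%:R.
Proof.
rewrite correlatorE /uniform_on_f.
under eq_bigr do rewrite modn_add_ord_eq (inj_eq (addIr _)).
by case: eqP => _; rewrite ?sum_const_ord_inv // big1.
Qed.

Section Uniqueness.

Variables (f : 'I_c1 -> 'I_c2 -> 'I_d) (p : behaviour R d c1 c2).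
Hypotheses (p_distr : is_cond_distr p) (p_ns : non_signalling p).
Hypothesis p_corr : forall k s1 s2, correlator p k s1 s2 = (k == f s1 s2)%:R.

Lemma behaviour_off_line m1 m2 s1 s2 :
  m2 != f s1 s2 - m1 -> p m1 m2 s1 s2 = 0.
Proof.
move=> off_line.
have corr0 : \sum_(i < d) p i (m1 + m2 - i) s1 s2 = 0.
  rewrite -correlatorE p_corr; apply/eqP; rewrite pnatr_eq0 eqb0.
  by apply: contra off_line => /eqP <-; rewrite addrC addKr.
have := psumr_eq0P (fun i _ => p_distr.1 i (m1 + m2 - i) s1 s2) corr0 (i := m1) isT.
by rewrite addrC addKr.
Qed.

Lemma marginal1_on_line m1 s1 s2 :
  marginal1 p m1 s1 s2 = p m1 (f s1 s2 - m1) s1 s2.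
Proof.
rewrite /marginal1 (bigD1 (f s1 s2 - m1)) //= big1 ?addr0 //.
by move=> m2 /behaviour_off_line.
Qed.

Lemma marginal2_on_line m2 s1 s2 :
  marginal2 p m2 s1 s2 = p (f s1 s2 - m2) m2 s1 s2.
Proof.
rewrite /marginal2 (bigD1 (f s1 s2 - m2)) //= big1 ?addr0 //.
by move=> m1 off_line; apply: behaviour_off_line; rewrite eq_subr_sym.
Qed.

Lemma marginal1_indep s1 s2 s2' m : marginal1 p m s1 s2 = marginal1 p m s1 s2'.
Proof. exact: p_ns.1. Qed.

(* Transported through Bob's marginal, which does not see s1. *)
Lemma marginal1_shift m s1 s1' s2 :
  marginal1 p m s1' s2 = marginal1 p (m + (f s1 s2 - f s1' s2)) s1 s2.
Proof.
rewrite !marginal1_on_line.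
set m2 := f s1' s2 - m.
have -> : m = f s1' s2 - m2 by rewrite /m2; ring.
rewrite -marginal2_on_line /marginal2 (p_ns.2 m2 s1' s1 s2) -/(marginal2 _ _ _ _).
rewrite marginal2_on_line; congr p; rewrite /m2; ring.
Qed.

Lemma marginal1_periodic s1 s1' s2 s2' x :
  let u := (f s1 s2 - f s1' s2) - (f s1 s2' - f s1' s2') in
  marginal1 p (x + u) s1 s2 = marginal1 p x s1 s2.
Proof.
move=> u; set y := x - (f s1 s2' - f s1' s2').
have -> : x + u = y + (f s1 s2 - f s1' s2) by rewrite /y /u; ring.
have -> : marginal1 p x s1 s2 = marginal1 p (y + (f s1 s2' - f s1' s2')) s1 s2.
  by congr marginal1; rewrite /y; ring.
by rewrite -(marginal1_shift y s1 s1') (marginal1_indep _ _ s2') (marginal1_shift y s1 s1')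
  (marginal1_indep s1 s2' s2).
Qed.

Lemma marginal1_uniform : prime d -> ~ additively_separable f ->
  forall m s1 s2, marginal1 p m s1 s2 = d%:R^-1.
Proof.
move=> d_prime not_sep.
have [a [a' [b [b' diff2_neq]]]] := non_separable_diff2 not_sep.
have const m : marginal1 p m a b = marginal1 p 0 a b.
  apply: (shift_invariant_const d_prime _ (marginal1_periodic a a' b b')).
  by rewrite subr_eq0.
have const_inv m : marginal1 p m a b = d%:R^-1.
  rewrite const; apply: sum_const_ord_eq1; rewrite -(p_distr.2 a b).
  by apply: eq_bigr => m1 _; rewrite -(const m1).
by move=> m s1 s2; rewrite (marginal1_indep _ _ b) (marginal1_shift _ a) const_inv.
Qed.

End Uniqueness.

End Behaviours.

Theorem lemma2p3p1 (R : realFieldType) (d c1 c2 : nat) (hd : prime d)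
  (f : 'I_c1 -> 'I_c2 -> 'I_d) (hf : ~ additively_separable f) :
  (is_cond_distr (uniform_on_f R f) /\ non_signalling (uniform_on_f R f) /\
   (forall k s1 s2, correlator (uniform_on_f R f) k s1 s2 = (k == f s1 s2)%:R))
  /\
  (forall p : behaviour R d c1 c2,
     is_cond_distr p -> non_signalling p ->
     (forall k s1 s2, correlator p k s1 s2 = (k == f s1 s2)%:R) ->
     p = uniform_on_f R f).
Proof.
case: d hd f hf => [|[|n]] // hd f hf.
split.
  split; [exact: uniform_on_f_cond_distr | split].
  - exact: uniform_on_f_non_signalling.
  - exact: correlator_uniform_on_f.
move=> p p_distr p_ns p_corr.
apply: functional_extensionality => m1; apply: functional_extensionality => m2.
apply: functional_extensionality => s1; apply: functional_extensionality => s2.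
rewrite /uniform_on_f modn_add_ord_eq; case: eqP => [-> | /eqP off_line].
  by rewrite -(marginal1_on_line p_distr p_corr) (marginal1_uniform p_distr p_ns p_corr).
exact: behaviour_off_line.
Qed.
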